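(* Let $K:\ell^2\to\mathcal{H}$ be a bounded, linear and injective operator into a real Hilbert space $\mathcal{H}$, $f\in\mathcal{H}$, $w=(w_k)$ with $w_k\ge w_0>0$, $\gamma>0$, and let $\bar u$ be the unique minimizer of $\Psi(u)=\frac12\|Ku-f\|_{\mathcal{H}}^2+\sum_k w_k|u_k|$ over $\ell^2$. For $u\in\ell^2$ let $\mathcal{A}(u)=\{k: |u-\gamma K^*(Ku-f)|_k>\gamma w_k\}$ and $\mathcal{G}(u)=(I-P_{\mathcal{A}(u)})+\gamma P_{\mathcal{A}(u)}K^*K$. Let $k_0\in\mathbb{N}$ and $\rho>0$ be such that $\|u-\bar u\|<\rho$ implies $\mathcal{A}(u)\subset\{1,\dots,k_0\}$. Then $\mathcal{G}(u)^{-1}$ is uniformly bounded on the ball $B_\rho(\bar u)=\{u\in\ell^2:\|u-\bar u\|<\rho\}$, i.e. $\sup_{u\in B_\rho(\bar u)}\|\mathcal{G}(u)^{-1}\|<\infty$.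
   Context: $K^*$ is the Hilbert space adjoint of $K$; $|x|_k$ means $|x_k|$; $P_{\mathcal{B}}$ is the coordinate projection onto the indices in $\mathcal{B}\subset\mathbb{N}$. Each $\mathcal{G}(u)$ is invertible on $\ell^2$. *)

From HB Require Import structures.
From mathcomp Require Import all_boot all_order all_algebra.
From mathcomp Require Import all_classical all_reals all_analysis.
Set Implicit Arguments. Unset Strict Implicit. Unset Printing Implicit Defensive.
Import Order.TTheory GRing.Theory Num.Theory.
Local Open Scope ring_scope.
Local Open Scope classical_set_scope.

Section Defs.
Variable R : realType.

Definition l2 (u : nat -> R) : Prop :=
  (\sum_(0 <= k <oo) ((u k ^+ 2)%:E) < +oo)%E.
Definition l2norm (u : nat -> R) : R :=
  Num.sqrt (fine (\sum_(0 <= k <oo) ((u k ^+ 2)%:E))).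

Variable H : lmodType R.

Definition inner_product (dot : H -> H -> R) : Prop :=
  [/\ forall x y, dot x y = dot y x,
      forall (a : R) x y z, dot (a *: x + y) z = a * dot x z + dot y z,
      forall x, 0 <= dot x x
    & forall x, dot x x = 0 -> x = 0].

Definition hnorm (dot : H -> H -> R) (x : H) : R := Num.sqrt (dot x x).

Definition hcomplete (dot : H -> H -> R) : Prop :=
  forall s : nat -> H,
    (forall e : R, 0 < e -> exists N, forall m n, (N <= m)%N -> (N <= n)%N ->
        hnorm dot (s m - s n) < e) ->
    exists l : H, forall e : R, 0 < e -> exists N, forall n, (N <= n)%N ->
        hnorm dot (s n - l) < e.

Definition linear_l2 (K : (nat -> R) -> H) : Prop :=
  forall (a : R) u v, l2 u -> l2 v ->
    K (fun k => a * u k + v k) = a *: K u + K v.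
Definition bounded_l2 (dot : H -> H -> R) (K : (nat -> R) -> H) : Prop :=
  exists M : R, forall u, l2 u -> hnorm dot (K u) <= M * l2norm u.
Definition injective_l2 (K : (nat -> R) -> H) : Prop :=
  forall u v, l2 u -> l2 v -> K u = K v -> u = v.

Definition is_adjoint (dot : H -> H -> R) (K : (nat -> R) -> H)
  (Kadj : H -> nat -> R) : Prop :=
  forall h, l2 (Kadj h) /\
    forall v, l2 v -> series (fun k => Kadj h k * v k) @ \oo --> (dot h (K v) : R^o).

Definition Psi (dot : H -> H -> R) (K : (nat -> R) -> H) (f : H)
  (w : nat -> R) (u : nat -> R) : \bar R :=
  ((2^-1 * hnorm dot (K u - f) ^+ 2)%:E
   + \sum_(0 <= k <oo) ((w k * `|u k|)%:E))%E.

Definition active (K : (nat -> R) -> H) (Kadj : H -> nat -> R) (f : H)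
  (w : nat -> R) (gamma : R) (u : nat -> R) (k : nat) : bool :=
  gamma * w k < `| u k - gamma * Kadj (K u - f) k |.

Definition Gop (K : (nat -> R) -> H) (Kadj : H -> nat -> R) (f : H)
  (w : nat -> R) (gamma : R) (u : nat -> R) (x : nat -> R) : nat -> R :=
  fun k => if active K Kadj f w gamma u k then gamma * Kadj (K x) k else x k.

End Defs.

(* For u near ubar the active set A(u) lies in [0, k0). Write x = p + r with p
   the restriction of x to A(u). Off A(u), G(u) x agrees with x, so |r| <= |G(u) x|;
   on A(u), (G(u) x)_i = gamma <K e_i, K x>. Hence <K e_i, K p> is bounded by a
   multiple of |G(u) x|, and expanding |K p|^2 = sum_i p_i <K e_i, K p> gives
   |K p| <= c |G(u) x|. Finally K is injective on the finite-dimensional space of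
   sequences supported in [0, k0), so the coordinates of p are bounded by a
   multiple of |K p|; none of these constants depends on u. *)

From HB Require Import structures.
From mathcomp Require Import all_boot all_order all_algebra.
From mathcomp Require Import all_classical all_reals all_analysis.
From mathcomp Require Import ring.
Import Order.TTheory GRing.Theory Num.Theory.
Set Implicit Arguments. Unset Strict Implicit. Unset Printing Implicit Defensive.
Local Open Scope ring_scope.
Local Open Scope classical_set_scope.

Section SequenceSpace.
Context {R : realType}.
Implicit Types (u x y : nat -> R) (N : nat).

Lemma ler_sqr_norm (a b : R) : `|a| <= `|b| -> a ^+ 2 <= b ^+ 2.
Proof.
by move=> ab; rewrite -real_normK ?num_real// -[b ^+ 2]real_normK ?num_real// lerXn2r.
Qed.

Lemma le_of_sqr_le_mul (a b : R) : 0 <= b -> a ^+ 2 <= a * b -> a <= b.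
Proof.
move=> b0 ab; have [a0|a_gt0] := lerP a 0; first exact: le_trans a0 b0.
by rewrite expr2 ler_pM2l in ab.
Qed.

Lemma sqr_series_ge0 u : (0 <= \sum_(0 <= k <oo) ((u k ^+ 2)%:E))%E.
Proof. by apply: nneseries_ge0 => k _ _; rewrite lee_fin sqr_ge0. Qed.

Lemma l2norm_ge0 u : 0 <= l2norm u.
Proof. exact: sqrtr_ge0. Qed.

Lemma l2normK u : l2norm u ^+ 2 = fine (\sum_(0 <= k <oo) ((u k ^+ 2)%:E))%E.
Proof. by rewrite sqr_sqrtr// fine_ge0// sqr_series_ge0. Qed.

Lemma sqr_le_sum_nat (F : nat -> R) N i : (i < N)%N ->
  F i ^+ 2 <= \sum_(0 <= k < N) F k ^+ 2.
Proof.
move=> iN; rewrite big_mkord (bigD1 (Ordinal iN)) //= lerDl.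
by apply: sumr_ge0 => k _; exact: sqr_ge0.
Qed.

Lemma nneseries_truncated (g : nat -> R) N : (forall k, 0 <= g k) ->
  (\sum_(0 <= k <oo) ((if (k < N)%N then g k else 0)%:E) =
   (\sum_(0 <= k < N) g k)%:E)%E.
Proof.
move=> g0.
rewrite (@nneseries_split _ _ 0 N); last first.
  by move=> k _; case: ifP; rewrite lee_fin.
rewrite add0n (eseries0 (N:=N)) ?adde0; last by move=> i Ni _; rewrite ltnNge Ni.
by rewrite -sumEFin; apply: eq_big_nat => i /andP[_ ->].
Qed.

Lemma l2_finite_support u N : (forall k, (N <= k)%N -> u k = 0) -> l2 u.
Proof.
move=> uN; rewrite /l2 (_ : (\sum_(0 <= k <oo) _ =
    \sum_(0 <= k <oo) ((if (k < N)%N then u k ^+ 2 else 0)%:E))%E).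
  by rewrite nneseries_truncated ?ltry// => k; exact: sqr_ge0.
apply: eq_eseriesr => k _; case: ltnP => // /uN ->.
by rewrite expr0n.
Qed.

Lemma l2_dominated u y : l2 y -> (forall k, `|u k| <= `|y k|) ->
  l2 u /\ l2norm u <= l2norm y.
Proof.
move=> ly uy.
have le : (\sum_(0 <= k <oo) ((u k ^+ 2)%:E) <= \sum_(0 <= k <oo) ((y k ^+ 2)%:E))%E.
  apply: lee_nneseries => [k _ _|k _]; rewrite lee_fin ?sqr_ge0//.
  exact: ler_sqr_norm.
have lu : l2 u by apply: le_lt_trans ly.
split => //; rewrite /l2norm ler_sqrt ?fine_ge0 ?sqr_series_ge0//.
by apply: fine_le => //; rewrite ge0_fin_numE ?sqr_series_ge0.
Qed.

Lemma normr_le_l2norm y k : l2 y -> `|y k| <= l2norm y.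
Proof.
move=> ly.
have yk : ((y k ^+ 2)%:E <= \sum_(0 <= k <oo) ((y k ^+ 2)%:E))%E.
  apply: le_trans (nneseries_lim_ge k.+1 _); last first.
    by move=> n _ _; rewrite lee_fin sqr_ge0.
  by rewrite big_nat_recr//= leeDr//; apply: sume_ge0 => i _; rewrite lee_fin sqr_ge0.
rewrite -sqrtr_sqr /l2norm ler_sqrt ?fine_ge0 ?sqr_series_ge0//.
by rewrite -lee_fin fineK// ge0_fin_numE ?sqr_series_ge0.
Qed.

Lemma l2norm_sqr_le_finite_excess x y N (T : R) : l2 y -> 0 <= T ->
  (forall k, x k ^+ 2 <= y k ^+ 2 + (if (k < N)%N then T else 0)) ->
  l2 x /\ l2norm x ^+ 2 <= l2norm y ^+ 2 + N%:R * T.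
Proof.
move=> ly T0 xy.
have yfin : (\sum_(0 <= k <oo) ((y k ^+ 2)%:E))%E \is a fin_num.
  by rewrite ge0_fin_numE ?sqr_series_ge0.
have le : (\sum_(0 <= k <oo) ((x k ^+ 2)%:E) <= (l2norm y ^+ 2 + N%:R * T)%:E)%E.
  apply: (@le_trans _ _ (\sum_(0 <= k <oo)
      ((y k ^+ 2)%:E + (if (k < N)%N then T else 0)%:E))%E).
    apply: lee_nneseries => [k _ _|k _]; first by rewrite lee_fin sqr_ge0.
    by rewrite -EFinD lee_fin.
  rewrite nneseriesD; last 2 first.
  - by move=> k _ _; rewrite lee_fin sqr_ge0.
  - by move=> k _ _; case: ifP; rewrite lee_fin.
  rewrite nneseries_truncated// EFinD l2normK fineK//.
  by rewrite sumr_const_nat subn0 mulr_natl.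
have lx : l2 x by apply: le_lt_trans le _; rewrite ltry.
split => //; rewrite l2normK -lee_fin fineK//.
by rewrite ge0_fin_numE ?sqr_series_ge0.
Qed.

Definition unitv (j : nat) : nat -> R := fun k => (k == j)%:R.
Definition truncv N x : nat -> R := fun k => if (k < N)%N then x k else 0.
Definition restrict (A : pred nat) x : nat -> R := fun k => if A k then x k else 0.

Lemma l2_unitv j : l2 (unitv j).
Proof.
apply: (@l2_finite_support _ j.+1) => k; rewrite /unitv.
by case: eqP => // ->; rewrite ltnn.
Qed.

Lemma l2_truncv N x : l2 (truncv N x).
Proof. by apply: (@l2_finite_support _ N) => k; rewrite /truncv leqNgt => /negbTE ->. Qed.

Lemma l2_0 : l2 (fun _ => 0 : R).
Proof. exact: (@l2_finite_support _ 0). Qed.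

End SequenceSpace.

Section InnerProduct.
Context {R : realType} {H : lmodType R} {dot : H -> H -> R}.
Hypothesis ip : inner_product dot.

Lemma dotC x y : dot x y = dot y x.
Proof. by case: ip. Qed.

Lemma dotDZl a x y z : dot (a *: x + y) z = a * dot x z + dot y z.
Proof. by case: ip. Qed.

Lemma dotDZr a x y z : dot z (a *: x + y) = a * dot z x + dot z y.
Proof. by rewrite dotC dotDZl (dotC x) (dotC y). Qed.

Lemma dot_ge0 x : 0 <= dot x x.
Proof. by case: ip. Qed.

Lemma dot_eq0 x : dot x x = 0 -> x = 0.
Proof. by case: ip => _ _ _; apply. Qed.

Lemma dot0l z : dot 0 z = 0.
Proof.
have := dotDZl 1 0 0 z; rewrite scaler0 addr0 mul1r => h.
by apply: (addrI (dot 0 z)); rewrite addr0 -h.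
Qed.

Lemma dotr0 z : dot z 0 = 0.
Proof. by rewrite dotC dot0l. Qed.

Lemma dotDl x y z : dot (x + y) z = dot x z + dot y z.
Proof. by rewrite -(scale1r x) dotDZl mul1r scale1r. Qed.

Lemma dotZl a x z : dot (a *: x) z = a * dot x z.
Proof. by rewrite -(addr0 (a *: x)) dotDZl dot0l addr0. Qed.

Lemma dotBr x y z : dot z (x - y) = dot z x - dot z y.
Proof. by rewrite -scaleN1r addrC dotDZr mulN1r addrC. Qed.

Lemma dot_suml n (c : nat -> R) (v : nat -> H) z :
  dot (\sum_(i < n) c i *: v i) z = \sum_(i < n) c i * dot (v i) z.
Proof.
elim: n => [|n IH]; first by rewrite !big_ord0 dot0l.
by rewrite !big_ord_recr /= dotDl IH dotZl.
Qed.

Lemma hnorm_ge0 x : 0 <= hnorm dot x.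
Proof. exact: sqrtr_ge0. Qed.

Lemma hnorm_sqr x : hnorm dot x ^+ 2 = dot x x.
Proof. by rewrite sqr_sqrtr ?dot_ge0. Qed.

Lemma cauchy_schwarz x y : `|dot x y| <= hnorm dot x * hnorm dot y.
Proof.
have [y0|yn0] := eqVneq (dot y y) 0.
  by rewrite (dot_eq0 y0) dotr0 normr0 mulr_ge0 ?hnorm_ge0.
have yy_gt0 : 0 < dot y y by rewrite lt_def yn0 dot_ge0.
have key : dot x y ^+ 2 <= dot x x * dot y y.
  (* expand 0 <= <x - t y, x - t y> at the minimising t = <x, y> / <y, y> *)
  have := dot_ge0 ((- (dot x y / dot y y)) *: y + x).
  rewrite dotDZl !dotDZr [dot y x]dotC.
  have -> : - (dot x y / dot y y) * (- (dot x y / dot y y) * dot y y + dot x y)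
      + (- (dot x y / dot y y) * dot x y + dot x x)
      = dot x x - dot x y ^+ 2 / dot y y by field; rewrite gt_eqF.
  by rewrite subr_ge0 ler_pdivrMr.
rewrite /hnorm -sqrtrM ?dot_ge0// -sqrtr_sqr ler_sqrt//.
by rewrite mulr_ge0 ?dot_ge0.
Qed.

End InnerProduct.

Section BoundedOperator.
Context {R : realType} {H : lmodType R} {dot : H -> H -> R}.
Context {K : (nat -> R) -> H} {Kadj : H -> nat -> R}.
Hypotheses (ip : inner_product dot) (linK : linear_l2 K).
Hypotheses (injK : injective_l2 K) (adjK : is_adjoint dot K Kadj).

Lemma K0 : K (fun _ => 0) = 0.
Proof.
have := linK 1 l2_0 l2_0.
rewrite (_ : (fun _ => 1 * 0 + 0) = fun _ => 0); last first.
  by apply/funext => k; rewrite mulr0 addr0.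
by rewrite scale1r => /eqP; rewrite addrC -subr_eq subrr => /eqP.
Qed.

Lemma K_truncv n c : K (truncv n c) = \sum_(i < n) c i *: K (unitv i).
Proof.
elim: n => [|n IH].
  by rewrite big_ord0 -K0; congr K; apply/funext => k.
rewrite big_ord_recr /= -IH addrC -linK; [congr K | exact: l2_unitv | exact: l2_truncv].
apply/funext => k; rewrite /truncv /unitv ltnS leq_eqVlt.
by case: eqP => [->|_] /=; [rewrite ltnn mulr1 addr0 | rewrite mulr0 add0r].
Qed.

Lemma dotr_K_truncv n c z :
  dot z (K (truncv n c)) = \sum_(i < n) c i * dot z (K (unitv i)).
Proof.
rewrite (dotC ip) K_truncv (dot_suml ip _ c (fun i => K (unitv i))).
by apply: eq_bigr => i _; rewrite (dotC ip).
Qed.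

Lemma Kadj_unitv h k : Kadj h k = dot h (K (unitv k)).
Proof.
have [_ /(_ _ (l2_unitv k)) Kadj_cvg] := adjK h.
have Kadj_cst : series (fun i => Kadj h i * unitv k i) @ \oo --> (Kadj h k : R^o).
  apply: (@cvg_near_cst nat R^o); near=> n.
  rewrite seriesEnat /= (bigD1_seq k) ?mem_index_iota ?iota_uniq//=; last first.
    by near: n; exists k.+1.
  rewrite /unitv eqxx mulr1 big1 ?addr0// => i /negPf ik; by rewrite ik mulr0.
exact: (cvg_unique (@Rhausdorff R) Kadj_cst Kadj_cvg).
Unshelve. all: by end_near.
Qed.

Definition gram n : 'M[R]_n := \matrix_(i, j) dot (K (unitv i)) (K (unitv j)).

Lemma gram_unitmx n : gram n \in unitmx.
Proof.
rewrite unitmxE unitfE; apply/negP => /det0P [a a0 aG].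
pose c k := if insub k is Some i then a 0 i else 0.
have ca (i : 'I_n) : c i = a 0 i by rewrite /c valK.
have : dot (K (truncv n c)) (K (truncv n c)) = 0.
  rewrite dotr_K_truncv; transitivity (\sum_(i < n) c i * (a *m gram n) 0 i).
    apply: eq_bigr => i _; rewrite (dotC ip) dotr_K_truncv !mxE; congr (_ * _).
    by apply: eq_bigr => j _; rewrite !mxE ca (dotC ip).
  by rewrite aG big1 // => i _; rewrite mxE mulr0.
move/(dot_eq0 ip); rewrite -K0 => /(injK (l2_truncv n c) l2_0) c0.
move/eqP: a0; apply; apply/rowP => i.
by have := congr1 (fun f => f (val i)) c0; rewrite /truncv ltn_ord ca mxE => ->.
Qed.

Lemma truncv_gram_coord n (c : nat -> R) (i : 'I_n) :
  c i = \sum_(j < n) invmx (gram n) i j * dot (K (unitv j)) (K (truncv n c)).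
Proof.
pose cv : 'cV[R]_n := \col_l c l.
have : cv = invmx (gram n) *m (gram n *m cv).
  by rewrite mulmxA mulVmx ?gram_unitmx// mul1mx.
move/(congr1 (fun M : 'cV[R]_n => M i 0)); rewrite !mxE => ->.
apply: eq_bigr => j _; rewrite !mxE dotr_K_truncv; congr (_ * _).
by apply: eq_bigr => l _; rewrite !mxE mulrC.
Qed.

Lemma truncv_coord_bound n : exists2 W : R, 0 <= W &
  forall c i, (i < n)%N -> `|c i| <= W * hnorm dot (K (truncv n c)).
Proof.
pose B := invmx (gram n).
exists (\sum_(i < n) \sum_(j < n) `|B i j| * hnorm dot (K (unitv j))).
  by apply: sumr_ge0 => i _; apply: sumr_ge0 => j _; rewrite mulr_ge0 ?hnorm_ge0.
move=> c i ni; pose i' := Ordinal ni.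
rewrite (_ : c i = c i') // (truncv_gram_coord c i').
apply: le_trans (ler_norm_sum _ _ _) _.
apply: (@le_trans _ _ (\sum_(j < n)
    `|B i' j| * hnorm dot (K (unitv j)) * hnorm dot (K (truncv n c)))).
  by apply: ler_sum => j _; rewrite normrM -mulrA ler_wpM2l ?(cauchy_schwarz ip).
rewrite -mulr_suml ler_wpM2r ?hnorm_ge0// [leRHS](bigD1 i') //= lerDl.
by apply: sumr_ge0 => k _; apply: sumr_ge0 => j _; rewrite mulr_ge0 ?hnorm_ge0.
Qed.

Lemma bounded_l2_ge0 : bounded_l2 dot K ->
  exists2 M : R, 0 <= M & forall u, l2 u -> hnorm dot (K u) <= M * l2norm u.
Proof.
case=> M KM; exists (Num.max M 0); first by rewrite le_max lexx orbT.
move=> u /KM /le_trans; apply; apply: ler_wpM2r; first exact: l2norm_ge0.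
by rewrite le_max lexx.
Qed.

Definition Gact (gamma : R) (A : pred nat) x : nat -> R :=
  fun k => if A k then gamma * Kadj (K x) k else x k.

Definition active_bound (gamma M W : R) (N : nat) : R :=
  W * (W * (N%:R / gamma + M * \sum_(i < N) hnorm dot (K (unitv i)))).

Section ActiveSet.
Variables (gamma M W : R) (N : nat) (A : pred nat) (x : nat -> R).
Hypotheses (gamma_gt0 : 0 < gamma) (M_ge0 : 0 <= M) (W_ge0 : 0 <= W).
Hypothesis K_le : forall u, l2 u -> hnorm dot (K u) <= M * l2norm u.
Hypothesis truncv_le :
  forall c i, (i < N)%N -> `|c i| <= W * hnorm dot (K (truncv N c)).
Hypothesis A_lt : forall k, A k -> (k < N)%N.
Hypothesis x_l2 : l2 x.

Let gamma_ge0 : 0 <= gamma := ltW gamma_gt0.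

Let scale_ge0 : 0 <= N%:R / gamma + M * \sum_(i < N) hnorm dot (K (unitv i)).
Proof.
by rewrite addr_ge0 ?divr_ge0 ?mulr_ge0 // sumr_ge0 // => i _; exact: hnorm_ge0.
Qed.

Local Notation y := (Gact gamma A x).
Local Notation p := (truncv N (restrict A x)).
Local Notation r := (fun k => x k - p k).

Lemma Gact_l2 : l2 y.
Proof.
have T_ge0 : 0 <= \sum_(0 <= k < N) y k ^+ 2 by apply: sumr_ge0 => k _; exact: sqr_ge0.
apply: (proj1 (l2norm_sqr_le_finite_excess (N := N) x_l2 T_ge0 _)) => k.
case: (boolP (A k)) => Ak.
  by rewrite A_lt // ler_wpDl ?sqr_ge0 // sqr_le_sum_nat // A_lt.
by rewrite {1}/Gact (negbTE Ak) lerDl; case: ifP.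
Qed.

Lemma truncv_restrict k : p k = restrict A x k.
Proof.
rewrite /truncv /restrict; case: ltnP => // Nk.
by case: ifP => // /A_lt; rewrite ltnNge Nk.
Qed.

Lemma inactive_part_le : l2 r /\ l2norm r <= l2norm y.
Proof.
apply: l2_dominated Gact_l2 _ => k; rewrite truncv_restrict /restrict /Gact.
by case: ifP => _; rewrite ?subrr ?normr0 ?normr_ge0 ?subr0.
Qed.

Lemma K_active_part : K p = K x - K r.
Proof.
have -> : r = fun k => -1 * p k + x k by apply/funext => k; rewrite mulN1r addrC.
rewrite linK; [|exact: l2_truncv|exact: x_l2].
by rewrite scaleN1r opprD opprK addrCA subrr addr0.
Qed.

Lemma Gact_active i : A i -> y i / gamma = dot (K (unitv i)) (K x).
Proof.
move=> Ai; rewrite (dotC ip) -Kadj_unitv /Gact Ai mulrC mulKf //.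
by rewrite gt_eqF.
Qed.

Lemma dot_K_active_part_le i : A i ->
  `|dot (K (unitv i)) (K p)| <=
    l2norm y / gamma + hnorm dot (K (unitv i)) * (M * l2norm y).
Proof.
move=> Ai; have [r_l2 r_le] := inactive_part_le.
rewrite K_active_part (dotBr ip) -Gact_active //.
apply: le_trans (ler_normB _ _) _; apply: lerD.
  rewrite normrM normfV (gtr0_norm gamma_gt0) ler_pM2r ?invr_gt0 //.
  exact: normr_le_l2norm Gact_l2.
apply: le_trans (cauchy_schwarz ip _ _) _; apply: ler_wpM2l; first exact: hnorm_ge0.
by apply: le_trans (K_le r_l2) _; apply: ler_wpM2l.
Qed.

Lemma hnorm_K_active_part_le : hnorm dot (K p) <=
  W * ((N%:R / gamma + M * \sum_(i < N) hnorm dot (K (unitv i))) * l2norm y).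
Proof.
have Kp_ge0 : 0 <= hnorm dot (K p) := hnorm_ge0 _.
have y_ge0 := l2norm_ge0 y.
apply: le_of_sqr_le_mul; first by rewrite !mulr_ge0.
rewrite (hnorm_sqr ip) [in X in dot X _]K_truncv.
rewrite (dot_suml ip _ _ (fun i => K (unitv i))).
apply: (@le_trans _ _ (\sum_(i < N) W * hnorm dot (K p) *
    (l2norm y / gamma + hnorm dot (K (unitv i)) * (M * l2norm y)))).
  apply: ler_sum => i _; case: (boolP (A i)) => Ai.
    apply: le_trans (ler_norm _) _; rewrite normrM ler_pM ?normr_ge0 //.
      exact: truncv_le (A_lt Ai).
    exact: dot_K_active_part_le.
  rewrite {1}/restrict (negbTE Ai) mul0r.
  by rewrite !(mulr_ge0, addr_ge0, invr_ge0, hnorm_ge0).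
rewrite -mulr_sumr big_split /= sumr_const card_ord -mulr_suml -mulr_natr.
by rewrite le_eqVlt; apply/orP; left; apply/eqP; ring.
Qed.

Lemma active_coord_le i : A i -> `|x i| <= active_bound gamma M W N * l2norm y.
Proof.
move=> Ai; have xi : restrict A x i = x i by rewrite /restrict Ai.
rewrite -xi; apply: le_trans (truncv_le (restrict A x) (A_lt Ai)) _.
by rewrite /active_bound -!mulrA; apply: ler_wpM2l => //; exact: hnorm_K_active_part_le.
Qed.

Lemma l2norm_le_Gact :
  l2norm x <= Num.sqrt (N%:R * active_bound gamma M W N ^+ 2 + 1) * l2norm y.
Proof.
set B := active_bound gamma M W N; have y_ge0 := l2norm_ge0 y.
have B_ge0 : 0 <= B by rewrite !mulr_ge0.
have x_sqr_le k :
    x k ^+ 2 <= y k ^+ 2 + (if (k < N)%N then (B * l2norm y) ^+ 2 else 0).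
  case: (boolP (A k)) => Ak.
    rewrite A_lt // ler_wpDl ?sqr_ge0 //; apply: ler_sqr_norm.
    by rewrite [leRHS]ger0_norm ?mulr_ge0 //; exact: active_coord_le.
  by rewrite {1}/Gact (negbTE Ak) lerDl; case: ifP; rewrite ?sqr_ge0.
have [_ x_le] := l2norm_sqr_le_finite_excess Gact_l2 (sqr_ge0 _) x_sqr_le.
have c_ge0 : 0 <= N%:R * B ^+ 2 + 1 by rewrite addr_ge0 ?mulr_ge0 ?sqr_ge0.
rewrite -(ger0_norm (l2norm_ge0 x)) -(ger0_norm y_ge0) -!sqrtr_sqr -sqrtrM //.
rewrite ler_sqrt ?mulr_ge0 ?sqr_ge0 //; apply: le_trans x_le _.
by rewrite le_eqVlt; apply/orP; left; apply/eqP; ring.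
Qed.

End ActiveSet.

Lemma Gact_inv_uniform_bound gamma N : 0 < gamma -> bounded_l2 dot K ->
  exists C : R, forall A : pred nat, (forall k, A k -> (k < N)%N) ->
    forall x, l2 x -> l2norm x <= C * l2norm (Gact gamma A x).
Proof.
move=> gamma_gt0 /bounded_l2_ge0 [M M_ge0 K_le].
have [W W_ge0 truncv_le] := truncv_coord_bound N.
exists (Num.sqrt (N%:R * active_bound gamma M W N ^+ 2 + 1)) => A A_lt x x_l2.
exact: l2norm_le_Gact gamma_gt0 M_ge0 W_ge0 K_le truncv_le A_lt x_l2.
Qed.

End BoundedOperator.

Theorem corollary3p12 (R : realType) (H : lmodType R) (dot : H -> H -> R)
  (K : (nat -> R) -> H) (Kadj : H -> nat -> R) (f : H) (w : nat -> R)
  (w0 gamma : R) (ubar : nat -> R) (k0 : nat) (rho : R) :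
  inner_product dot -> hcomplete dot ->
  linear_l2 K -> bounded_l2 dot K -> injective_l2 K -> is_adjoint dot K Kadj ->
  0 < w0 -> (forall k, w0 <= w k) -> 0 < gamma ->
  l2 ubar -> (forall u, l2 u -> (Psi dot K f w ubar <= Psi dot K f w u)%E) ->
  0 < rho ->
  (forall u, l2 u -> l2norm (fun k => u k - ubar k) < rho ->
     forall k, active K Kadj f w gamma u k -> (k < k0)%N) ->
  (forall u, l2 u -> forall y, l2 y ->
     exists x, [/\ l2 x, Gop K Kadj f w gamma u x = y &
       forall x', l2 x' -> Gop K Kadj f w gamma u x' = y -> x' = x]) ->
  exists C : R, forall u, l2 u -> l2norm (fun k => u k - ubar k) < rho ->
    forall x, l2 x -> l2norm x <= C * l2norm (Gop K Kadj f w gamma u x).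
Proof.
move=> ip _ linK K_bdd injK adjK _ _ gamma_gt0 _ _ _ active_lt _.
have [C GC] := Gact_inv_uniform_bound ip linK injK adjK k0 gamma_gt0 K_bdd.
exists C => u u_l2 u_near x x_l2.
exact: GC (active K Kadj f w gamma u) (active_lt u u_l2 u_near) x x_l2.
Qed.
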